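(* Let $d\ge 2$ and let $\mathcal A$ be the space of closed curves with constant speed parametrization defined below, equipped with the Riemannian metric $\langle v,w\rangle_{T_\eta\mathcal A}=L(\eta)\int_0^1 v(s)\cdot w(s)\,ds$. Then the associated Riemannian distance $d_{\mathcal A}$ is non-degenerate: for all $\eta_0,\eta_1\in\mathcal A$ with $\eta_0\neq\eta_1$ one has $d_{\mathcal A}(\eta_0,\eta_1)>0$.
   Context: $\mathbb S^1=\mathbb R/\mathbb Z$. $\mathcal K=\{\eta\in H^2(\mathbb S^1;\mathbb R^d):\int_0^1\eta(s)\,ds=0\}$, $L(\eta)=\int_0^1|\partial_s\eta|\,ds$, and $\mathcal A=\{\eta\in\mathcal K: |\partial_s\eta(s)|=L(\eta)>0\ \text{for all } s\in\mathbb S^1\}$, a smooth Hilbert submanifold of $\mathcal K$. For a $C^1$ path $\eta:[0,1]\to\mathcal A$ its Riemannian length is $\int_0^1\|\dot\eta(t)\|_{L^2(\mathbb S^1)}\sqrt{L(\eta(t))}\,dt$, and $d_{\mathcal A}(\eta_0,\eta_1)$ is the infimum of the lengths of such paths with $\eta(0)=\eta_0$, $\eta(1)=\eta_1$. *)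

(* Curves in R^d are represented componentwise as
   families  eta : 'I_d -> R -> R  of 1-periodic real functions on R
   (functions on S^1 = R/Z), with R : realType. *)
From HB Require Import structures.
From mathcomp Require Import all_boot all_order all_algebra.
From mathcomp Require Import all_classical all_reals all_analysis.
Set Implicit Arguments. Unset Strict Implicit. Unset Printing Implicit Defensive.
Import Order.TTheory GRing.Theory Num.Theory.
Import numFieldNormedType.Exports.
Local Open Scope classical_set_scope.
Local Open Scope ring_scope.

Section Curves.
Variable R : realType.
Local Notation mu := (@lebesgue_measure R).

Definition I01 : set R := `[0, 1]%classic.

Definition periodic1 (f : R -> R) : Prop := forall s, f (s + 1) = f s.

Definition sq_int01 (g : R -> R) : Prop :=
  measurable_fun I01 g /\
  (\int[mu]_(x in I01) ((g x ^+ 2)%:E) < +oo)%E.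

(* f : S^1 -> R lies in H^2(S^1), with weak second derivative g:
   f is 1-periodic and C^1 (differentiable everywhere, hence f' is periodic),
   and f' is the primitive of the square integrable function g. *)
Definition H2w (f g : R -> R) : Prop :=
  [/\ periodic1 f, (forall x, derivable f x 1), sq_int01 g &
      forall t, 0 <= t <= 1 ->
        derive1 f t = derive1 f 0 + Rintegral mu `[0, t]%classic g].

Definition H2 (f : R -> R) : Prop := exists g, H2w f g.

Variable d : nat.
Definition curve := 'I_d -> R -> R.

Definition speed (eta : curve) (s : R) : R :=
  Num.sqrt (\sum_(i < d) (derive1 (eta i) s) ^+ 2).

Definition curve_length (eta : curve) : R := Rintegral mu I01 (speed eta).

Definition inK (eta : curve) : Prop :=
  (forall i, H2 (eta i)) /\ (forall i, Rintegral mu I01 (eta i) = 0).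

Definition inA (eta : curve) : Prop :=
  [/\ inK eta, 0 < curve_length eta & forall s, speed eta s = curve_length eta].

Definition H2sq (f f2 : curve) : R :=
  \sum_(i < d) (Rintegral mu I01 (fun s => f i s ^+ 2)
              + Rintegral mu I01 (fun s => derive1 (f i) s ^+ 2)
              + Rintegral mu I01 (fun s => f2 i s ^+ 2)).

Definition L2norm (f : curve) : R :=
  Num.sqrt (\sum_(i < d) Rintegral mu I01 (fun s => f i s ^+ 2)).

(* gam : [0,1] -> A is a C^1 path (as a map into the Hilbert space H^2),
   with velocity gdot; G and Gdot are the weak second s-derivatives of
   gam t and gdot t (used to evaluate H^2 norms). *)
Definition C1_path_A (gam G gdot Gdot : R -> curve) : Prop :=
  [/\ (forall t, 0 <= t <= 1 -> inA (gam t) /\ forall i, H2w (gam t i) (G t i)),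
      (forall t, 0 <= t <= 1 -> forall i, H2w (gdot t i) (Gdot t i)),
      (forall t, 0 <= t <= 1 ->
         (fun h => Num.sqrt (H2sq
             (fun i s => (gam (t + h) i s - gam t i s) / h - gdot t i s)
             (fun i s => (G (t + h) i s - G t i s) / h - Gdot t i s)))
         @ within (fun h => h != 0 /\ 0 <= t + h <= 1) (nbhs 0) --> 0) &
      (forall t, 0 <= t <= 1 ->
         (fun u => Num.sqrt (H2sq
             (fun i s => gdot u i s - gdot t i s)
             (fun i s => Gdot u i s - Gdot t i s)))
         @ within (fun u => 0 <= u <= 1) (nbhs t) --> 0)].

Definition path_length (gam gdot : R -> curve) : \bar R :=
  (\int[mu]_(t in I01)
      (L2norm (gdot t) * Num.sqrt (curve_length (gam t)))%:E)%E.

(* d_A(eta0, eta1) = inf of lengths of C^1 paths in A from eta0 to eta1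
   (extended real; +oo if there is no such path) *)
Definition distA (eta0 eta1 : curve) : \bar R :=
  ereal_inf [set l | exists gam G gdot Gdot,
     [/\ C1_path_A gam G gdot Gdot, gam 0 = eta0, gam 1 = eta1 &
         l = path_length gam gdot]].

End Curves.

(** Fix a coordinate [i] and the test function [w = eta0_i - eta1_i], and follow
    the [moment] [g t = ∫ gam(t)_i w] along a C^1 path [gam] in A.  Curves of A
    have mean zero and constant speed L, so their coordinates are bounded by L;
    hence [|g| <= L ∫|w|], while [|g'| <= ‖gdot‖_{L^2} ‖w‖_{L^2}] by
    Cauchy-Schwarz.  As the length element [‖gdot‖ sqrt L] degenerates when
    L -> 0, compare it with [H ∘ g] for [H = soft_cube], [H x = x^3 / (1 + x^2)],
    which satisfies [0 <= H' x <= 3 sqrt |x|]: then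
    [|(H ∘ g)'| <= 3 sqrt(∫|w|) ‖w‖ · ‖gdot‖ sqrt L], and integrating bounds the
    length of every path from below by a fixed multiple of [|H (g 1) - H (g 0)|].
    This is positive since [g 0 - g 1 = ∫ w^2 > 0] and [H] is injective. *)
From HB Require Import structures.
From mathcomp Require Import all_boot all_order all_algebra.
From mathcomp Require Import all_classical all_reals all_analysis.
From mathcomp Require Import ring lra.

Set Implicit Arguments.
Unset Strict Implicit.
Unset Printing Implicit Defensive.
Import Order.TTheory GRing.Theory Num.Theory.
Import numFieldNormedType.Exports.
Local Open Scope classical_set_scope.
Local Open Scope ring_scope.

Ltac solve_continuous :=
  let x := fresh "x" in
  move=> x;
  repeat first
    [ exact: cvg_cst
    | match goal with H : continuous _ |- _ => exact: H end
    | exact: exprn_continuous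
    | apply: cvgM | apply: cvgB | apply: cvgD | apply: cvgN | apply: cvg_norm
    | apply: (continuous_cvg _ exprn_continuous) ].

Lemma ler_term_sum (R : numDomainType) (I : finType) (F : I -> R) (i : I) :
  (forall j, 0 <= F j) -> F i <= \sum_j F j.
Proof. by move=> F0; rewrite (bigD1 i) //= lerDl sumr_ge0. Qed.

Lemma nonneg_quadratic_discriminant (R : realFieldType) (A B X : R) :
  0 <= A -> 0 <= B -> (forall l, 0 <= A - 2 * l * X + l ^+ 2 * B) ->
  X ^+ 2 <= A * B.
Proof.
move=> A0 B0 q0; have [B00|Bn0] := eqVneq B 0.
  rewrite B00 mulr0; have [->|Xn0] := eqVneq X 0; first by rewrite expr0n.
  have := q0 ((A + 1) / (2 * X)); rewrite B00 mulr0 addr0.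
  have -> : 2 * ((A + 1) / (2 * X)) * X = A + 1 by field.
  lra.
have Bp : 0 < B by rewrite lt_def Bn0 B0.
have := q0 (X / B).
have -> : A - 2 * (X / B) * X + (X / B) ^+ 2 * B = (A * B - X ^+ 2) / B by field.
by rewrite ler_pdivlMr // mul0r subr_ge0.
Qed.

(* The integrand of [path_length] is not known to be measurable. *)
Lemma ge0_le_integral_nonmeasurable (R : realType) (d : measure_display)
    (T : measurableType d) (mu : measure T R) (D : set T) (f1 f2 : T -> \bar R) :
  (forall x, D x -> (0 <= f1 x)%E) -> (forall x, D x -> (f1 x <= f2 x)%E) ->
  (\int[mu]_(x in D) f1 x <= \int[mu]_(x in D) f2 x)%E.
Proof.
move=> f10 f12.
have f20 x : D x -> (0 <= f2 x)%E by move=> Dx; exact: le_trans (f10 _ Dx) (f12 _ Dx).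
rewrite !ge0_integralE //; apply: ereal_sup_le => _ [h /= hf <-].
exists h => //= x; apply: le_trans (hf x) _.
by rewrite /patch; case: ifP => // /[1!inE]; exact: f12.
Qed.

Section Integral01.
Variable R : realType.
Local Notation mu := (@lebesgue_measure R).
Local Notation J := (@I01 R).
Local Notation RI f := (Rintegral mu J f).

Lemma measurable_I01 : measurable J.
Proof. exact: measurable_itv. Qed.

Lemma lebesgue_measure_I01 : mu J = 1%E.
Proof. by rewrite /I01 lebesgue_measure_itv/= lte_fin ltr01 oppr0 adde0. Qed.

Lemma in_I01 (x : R) : J x <-> 0 <= x <= 1.
Proof. by rewrite /I01 /= in_itv. Qed.

Lemma I01E : J = (fun x => 0 <= x <= 1).
Proof. by apply/funext => x; rewrite /I01 /= in_itv. Qed.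

Lemma Rintegral01_cst (c : R) : RI (fun=> c) = c.
Proof.
rewrite Rintegral_cst; last exact: measurable_I01.
have -> : fine (mu J) = 1 by rewrite lebesgue_measure_I01.
by rewrite mulr1.
Qed.

Lemma continuous_integrable01 (f : R -> R) :
  continuous f -> mu.-integrable J (EFin \o f).
Proof.
move=> cf; apply: continuous_compact_integrable; first exact: segment_compact.
exact: continuous_subspaceT.
Qed.

Lemma Rintegral01D (f g : R -> R) : continuous f -> continuous g ->
  RI (fun s => f s + g s) = RI f + RI g.
Proof.
by move=> cf cg; rewrite RintegralD //;
  [exact: measurable_I01 | exact: continuous_integrable01..].
Qed.

Lemma Rintegral01B (f g : R -> R) : continuous f -> continuous g ->
  RI (fun s => f s - g s) = RI f - RI g.
Proof.
by move=> cf cg; rewrite RintegralB //;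
  [exact: measurable_I01 | exact: continuous_integrable01..].
Qed.

Lemma Rintegral01Z (c : R) (f : R -> R) : continuous f ->
  RI (fun s => c * f s) = c * RI f.
Proof.
by move=> cf; rewrite RintegralZl //;
  [exact: measurable_I01 | exact: continuous_integrable01].
Qed.

Lemma Rintegral01_sqr_ge0 (f : R -> R) : 0 <= RI (fun s => f s ^+ 2).
Proof. by apply: Rintegral_ge0 => x _; exact: sqr_ge0. Qed.

Lemma Rintegral01_Cauchy_Schwarz (f w : R -> R) : continuous f -> continuous w ->
  `|RI (fun s => f s * w s)| <=
  Num.sqrt (RI (fun s => f s ^+ 2)) * Num.sqrt (RI (fun s => w s ^+ 2)).
Proof.
move=> cf cw; rewrite -sqrtrM ?Rintegral01_sqr_ge0 // -sqrtr_sqr ler_wsqrtr //.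
apply: nonneg_quadratic_discriminant; rewrite ?Rintegral01_sqr_ge0 // => l.
rewrite -!Rintegral01Z; [|solve_continuous..].
rewrite -Rintegral01B; [|solve_continuous..].
rewrite -Rintegral01D; [|solve_continuous..].
have -> : (fun s => f s ^+ 2 - 2 * l * (f s * w s) + l ^+ 2 * w s ^+ 2) =
    (fun s => (f s - l * w s) ^+ 2) by apply/funext => s; ring.
exact: Rintegral01_sqr_ge0.
Qed.

Lemma Rintegral01_ge_subinterval (f : R -> R) (m p q : R) :
  continuous f -> (forall x, J x -> 0 <= f x) -> 0 <= m ->
  0 <= p -> p < q -> q <= 1 -> (forall x, p <= x <= q -> m <= f x) ->
  m * (q - p) <= RI f.
Proof.
move=> cf f0 m0 p0 pq q1 fm.
have If := continuous_integrable01 cf.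
have sub : [set` `[p, q]] `<=` J.
  by move=> x /=; rewrite in_itv /= => /andP[px xq]; apply/in_I01/andP; split; lra.
rewrite /Rintegral -lee_fin fineK; last by apply: (integrable_fin_num _ If); exact: measurable_I01.
apply: (@le_trans _ _ (\int[mu]_(x in [set` `[p, q]]) (f x)%:E)%E); last first.
  apply: ge0_subset_integral => //; first exact: measurable_I01.
  exact: (measurable_int _ If).
apply: (@le_trans _ _ (\int[mu]_(x in [set` `[p, q]]) m%:E)%E).
  rewrite integral_cst /=; last exact: measurable_itv.
  by rewrite lebesgue_measure_itv /= lte_fin pq -EFinD -EFinM.
apply: ge0_le_integral_nonmeasurable => x; first by rewrite lee_fin.
by rewrite /= in_itv /= lee_fin; exact: fm.
Qed.

Lemma Rintegral01_sqr_gt0 (f : R -> R) (s0 : R) :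
  continuous f -> 0 <= s0 <= 1 -> f s0 != 0 -> 0 < RI (fun s => f s ^+ 2).
Proof.
move=> cf /andP[s00 s01] fs0.
have cf2 : continuous (fun s => f s ^+ 2) by solve_continuous.
set c := f s0 ^+ 2.
have c0 : 0 < c by rewrite /c lt_def sqrf_eq0 fs0 sqr_ge0.
have [del del0 near_s0] :
    exists2 del, 0 < del & forall x, `|s0 - x| < del -> c / 2 <= f x ^+ 2.
  have /cvgrPdist_lt /(_ (c / 2)) := cf2 s0.
  have c20 : 0 < c / 2 by lra.
  move=> /(_ c20) /nbhs_ballP [del /= del0 hb]; exists del => // x sx.
  by have := ler_norm (c - f x ^+ 2); have := hb x sx; rewrite /c; lra.
have [e e0 [ed e2]] : exists2 e, 0 < e & e <= del / 2 /\ e <= 1 / 2.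
  exists (Num.min (del / 2) (1 / 2)); first by rewrite lt_min; apply/andP; split; lra.
  by rewrite !ge_min !lexx orbT.
have [p [p0 pe1 ps0 s0p]] :
    exists p, [/\ 0 <= p, p + e <= 1, p <= s0 & s0 <= p + e].
  have [se1|se1] := lerP (s0 + e) 1; first by exists s0; split; lra.
  by exists (s0 - e); split; lra.
apply: lt_le_trans (Rintegral01_ge_subinterval (m := c / 2) cf2 _ _ p0 _ pe1 _).
- by rewrite addrAC subrr add0r mulr_gt0 // divr_gt0.
- by move=> x _; exact: sqr_ge0.
- lra.
- by rewrite ltrDl.
move=> x /andP[px xp]; apply: near_s0.
have : `|s0 - x| <= e by rewrite ler_norml; apply/andP; split; lra.
lra.
Qed.

Lemma FTC01_abs_le (f f' F : R -> R) (K : R) : 0 < K ->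
  derivable_oo_LRcontinuous f 0 1 -> {in `]0, 1[, derive1 f =1 f'} ->
  {within `[0, 1], continuous f'} ->
  (forall t, 0 <= t <= 1 -> `|f' t| <= K * F t) ->
  ((`|f 1 - f 0| / K)%:E <= \int[mu]_(t in J) (F t)%:E)%E.
Proof.
move=> K0 df f'E cf' f'F.
have cf'J t : J t -> f' @ within J (nbhs t) --> f' t.
  by move: cf' => /subspace_continuousP; apply.
have c_absf' : {within J, continuous (fun t => `|f' t| / K)}.
  apply/subspace_continuousP => t Jt; apply: cvgM; last exact: cvg_cst.
  by apply: cvg_norm; exact: cf'J.
have I_absf' : mu.-integrable J (EFin \o (fun t => `|f' t| / K)).
  by apply: continuous_compact_integrable => //; exact: segment_compact.
have FTC : f 1 - f 0 = RI f'.
  by rewrite /Rintegral (continuous_FTC2 ltr01 cf' df f'E) -EFinB.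
apply: (@le_trans _ _ (RI (fun t => `|f' t| / K))%:E).
  rewrite lee_fin RintegralZr; first last.
  - apply: continuous_compact_integrable => //; first exact: segment_compact.
    by apply/subspace_continuousP => t Jt; apply: cvg_norm; exact: cf'J.
  - exact: measurable_I01.
  rewrite ler_pM2r ?invr_gt0 // FTC; apply: le_normr_Rintegral.
    exact: measurable_I01.
  apply: continuous_compact_integrable => //; exact: segment_compact.
rewrite /Rintegral fineK; last by apply: (integrable_fin_num _ I_absf'); exact: measurable_I01.
apply: ge0_le_integral_nonmeasurable => t Jt; first by rewrite lee_fin divr_ge0 // ltW.
by rewrite lee_fin ler_pdivrMr // mulrC f'F //; exact/in_I01.
Qed.

End Integral01.

Section Periodic.
Variable R : realType.
Implicit Types f g : R -> R.

Lemma periodic1_natr f : periodic1 f -> forall (k : nat) x, f (x + k%:R) = f x.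
Proof.
move=> fP; elim=> [|k IHk] x; first by rewrite addr0.
by rewrite -natr1 addrA fP IHk.
Qed.

Lemma periodic1_intr f : periodic1 f -> forall (n : int) x, f (x + n%:~R) = f x.
Proof.
move=> fP [k|k] x; first exact: periodic1_natr.
by rewrite NegzE -{2}(subrK k.+1%:R x) periodic1_natr.
Qed.

Lemma periodic1_eq f g : periodic1 f -> periodic1 g ->
  (forall s, 0 <= s <= 1 -> f s = g s) -> f = g.
Proof.
move=> fP gP fg; apply/funext => s.
have lo : (Num.floor s)%:~R <= s := floor_le s.
have hi : s < (Num.floor s + 1)%:~R := real_floorD1_gt (num_real s).
rewrite intrD in hi.
rewrite -(subrK (Num.floor s)%:~R s) (periodic1_intr fP) (periodic1_intr gP).
by apply: fg; apply/andP; split; lra.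
Qed.

End Periodic.

Lemma cvg_within_near_subset (T : Type) (U : topologicalType) (F : set_system T)
    {FF : Filter F} (A B : set T) (f : T -> U) (l : U) :
  (\forall x \near F, B x -> A x) -> f @ within A F --> l -> f @ within B F --> l.
Proof.
move=> BA fl P /fl; rewrite /within /= => AP.
by apply: filterS2 BA AP => x BAx AxP /BAx /AxP.
Qed.

Section DistanceBounds.
Variable R : realFieldType.

Lemma squeeze_dist_cvgr (T : Type) (F : set_system T) {FF : Filter F}
    (u v : T -> R) (l c : R) :
  (\forall x \near F, `|u x - l| <= v x * c) -> v @ F --> 0 -> u @ F --> l.
Proof.
move=> uv v0.
have vc0 : (fun x => v x * c) @ F --> 0 by rewrite -(mul0r c); apply: cvgM => //; exact: cvg_cst.
apply: (@squeeze_cvgr _ _ _ _ (fun x => l - v x * c) (fun x => l + v x * c) u).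
- by apply: filterS uv => x; rewrite ler_distl.
- by rewrite -[X in _ --> X]subr0; apply: cvgB => //; exact: cvg_cst.
- by rewrite -[X in _ --> X]addr0; apply: cvgD => //; exact: cvg_cst.
Qed.

Lemma diff_quotient_cvg_continuous (phi : R -> R) (S : set R) (t l : R) :
  (fun h => (phi (t + h) - phi t) / h)
    @ within (fun h => h != 0 /\ S (t + h)) (nbhs 0) --> l ->
  phi @ within S (nbhs t) --> phi t.
Proof.
move=> dq; apply/cvgrPdist_le => e e0.
move: dq => /cvgrPdist_le /(_ 1 ltr01).
rewrite near_withinE => /nbhs_ballP [del /= del0 near0].
have l1 : 0 < `|l| + 1 by rewrite ltr_pwDr // normr_ge0.
set rho := Num.min del (e / (`|l| + 1)).
have rho0 : 0 < rho by rewrite lt_min del0 divr_gt0.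
exists rho => // u /= tu Su.
have [-> | ut] := eqVneq u t; first by rewrite subrr normr0 ltW.
set h := u - t.
have h0 : h != 0 by rewrite subr_eq0.
have hdel : ball 0 del h.
  by rewrite /ball /= sub0r normrN distrC; apply: lt_le_trans tu _; rewrite ge_min lexx.
have he : `|h| <= e / (`|l| + 1).
  by rewrite distrC; apply/ltW; apply: lt_le_trans tu _; rewrite ge_min lexx orbT.
have tuh : t + h = u by rewrite /h addrC subrK.
have := near0 h hdel; rewrite tuh => /(_ (conj h0 Su)).
set q := (phi u - phi t) / h => lq.
have -> : phi t - phi u = - (h * q) by rewrite /q mulrC divfK // opprB.
have qb : `|q| <= `|l| + 1.
  rewrite -[q](subrK l) addrC; apply: le_trans (ler_normD _ _) _.
  by rewrite lerD2l distrC.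
rewrite normrN normrM; apply: le_trans (ler_pM _ _ he qb) _ => //.
by rewrite divfK // gt_eqF.
Qed.

End DistanceBounds.

Section SoftCube.
Context {R : realType}.
Implicit Types x : R.

Definition soft_cube x := x ^+ 3 / (1 + x ^+ 2).
Definition soft_cube' x := x ^+ 2 * (3 + x ^+ 2) / (1 + x ^+ 2) ^+ 2.

Lemma one_plus_sqr_gt0 x : 0 < 1 + x ^+ 2.
Proof. by rewrite ltr_pwDl // sqr_ge0. Qed.

Lemma is_derive_soft_cube x : is_derive x 1 soft_cube (soft_cube' x).
Proof.
have nz : (cst 1 + id ^+ 2) x != 0 by rewrite !fctE gt_eqF // one_plus_sqr_gt0.
have D := is_deriveM (is_deriveX 3 (is_derive_id x 1))
  (is_deriveV nz (is_deriveD (is_derive_cst (1 : R) x 1) (is_deriveX 2 (is_derive_id x 1)))).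
have -> : soft_cube = id ^+ 3 * (fun y => ((cst 1 + id ^+ 2) y)^-1) by [].
apply: is_derive_eq D _.
move: nz; rewrite !fctE /soft_cube' /GRing.scale /= => nz.
by field.
Qed.

Lemma continuous_soft_cube : continuous soft_cube.
Proof.
move=> x; apply: differentiable_continuous; apply/derivable1_diffP.
by case: (is_derive_soft_cube x).
Qed.

Lemma continuous_soft_cube' : continuous soft_cube'.
Proof.
move=> x; apply: cvgM; first by solve_continuous.
apply: cvgV; first by rewrite expf_neq0 // gt_eqF // one_plus_sqr_gt0.
by solve_continuous.
Qed.

Lemma soft_cube'_ge0 x : 0 <= soft_cube' x.
Proof.
rewrite /soft_cube' divr_ge0 ?sqr_ge0 // mulr_ge0 ?sqr_ge0 //.
by rewrite addr_ge0 ?sqr_ge0.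
Qed.

Lemma soft_cube'_le_sqrt x : soft_cube' x <= 3 * Num.sqrt `|x|.
Proof.
set a := `|x|; have a0 : 0 <= a := normr_ge0 x.
have xa : x ^+ 2 = a ^+ 2 by rewrite real_normK ?num_real.
have q0 := one_plus_sqr_gt0 a.
have a20 := sqr_ge0 a.
have r0 : 0 <= a ^+ 2 / (1 + a ^+ 2) by rewrite divr_ge0 // ltW.
have -> : soft_cube' x = a ^+ 2 / (1 + a ^+ 2) * ((3 + a ^+ 2) / (1 + a ^+ 2)).
  by rewrite /soft_cube' xa; field; rewrite gt_eqF.
have ratio3 : (3 + a ^+ 2) / (1 + a ^+ 2) <= 3 by rewrite ler_pdivrMr //; lra.
have ratio_sqrt : a ^+ 2 / (1 + a ^+ 2) <= Num.sqrt a.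
  rewrite -(ger0_norm r0) -sqrtr_sqr ler_wsqrtr // expr_div_n ler_pdivrMr ?exprn_gt0 //.
  have := mulr_ge0 (exprn_ge0 3 a0) (sqr_ge0 (a - 1)).
  have := exprn_ge0 3 a0; have := exprn_ge0 5 a0.
  nra.
rewrite mulrC; apply: ler_pM => //; first by rewrite divr_ge0 ?addr_ge0 // ltW.
Qed.

Lemma soft_cube_inj : injective soft_cube.
Proof.
move=> a b eq_ab.
have cube x : x ^+ 3 = soft_cube x * (1 + x ^+ 2).
  by rewrite /soft_cube divfK // gt_eqF // one_plus_sqr_gt0.
have cross : a ^+ 3 * (1 + b ^+ 2) = b ^+ 3 * (1 + a ^+ 2).
  by rewrite (cube a) (cube b) eq_ab; ring.
have : (a - b) * (a ^+ 2 + a * b + b ^+ 2 + a ^+ 2 * b ^+ 2) = 0.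
  by rewrite -(subrr (b ^+ 3 * (1 + a ^+ 2))) -{1}cross; ring.
move/eqP; rewrite mulf_eq0 subr_eq0 => /orP[/eqP // | /eqP factor0].
have ab0 : 0 <= a ^+ 2 * b ^+ 2 by rewrite mulr_ge0 ?sqr_ge0.
have := sqr_ge0 (a + b); have := sqr_ge0 a; have := sqr_ge0 b.
have a0 : a == 0 by rewrite -sqrf_eq0; apply/eqP; nra.
have b0 : b == 0 by rewrite -sqrf_eq0; apply/eqP; nra.
by rewrite (eqP a0) (eqP b0).
Qed.

End SoftCube.

Section ConstantSpeedCurves.
Variables (R : realType) (d : nat).
Local Notation mu := (@lebesgue_measure R).
Local Notation RI f := (Rintegral mu (@I01 R) f).
Implicit Types eta : curve R d.

Lemma inA_derivable eta i x : inA eta -> derivable (eta i) x 1.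
Proof. by case=> [[H2eta _] _ _]; have [g [_ deta _ _]] := H2eta i. Qed.

Lemma inA_continuous eta i : inA eta -> continuous (eta i).
Proof.
move=> etaA x; apply: differentiable_continuous; apply/derivable1_diffP.
exact: inA_derivable.
Qed.

Lemma inA_periodic eta i : inA eta -> periodic1 (eta i).
Proof. by case=> [[H2eta _] _ _]; have [g []] := H2eta i. Qed.

Lemma inA_neq eta0 eta1 : inA eta0 -> inA eta1 -> eta0 <> eta1 ->
  exists i s, 0 <= s <= 1 /\ eta0 i s != eta1 i s.
Proof.
move=> A0 A1 neq; apply: contrapT => eq01; apply/neq/funext => i.
apply: (periodic1_eq (inA_periodic i A0) (inA_periodic i A1)) => s s01.
by apply/eqP; apply: contrapT => /negP ne_s; apply: eq01; exists i, s.
Qed.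

Lemma abs_derive1_le_speed eta i s : `|derive1 (eta i) s| <= speed eta s.
Proof.
rewrite /speed -sqrtr_sqr ler_wsqrtr //.
apply: (ler_term_sum (F := fun j => derive1 (eta j) s ^+ 2)) => j; exact: sqr_ge0.
Qed.

Lemma inA_lipschitz eta i s x : inA eta -> 0 <= s <= 1 -> 0 <= x <= 1 ->
  `|eta i s - eta i x| <= curve_length eta.
Proof.
move=> etaA.
have L0 : 0 <= curve_length eta by case: etaA => _ /ltW.
wlog xs : s x / x < s.
  move=> ws s01 x01; have [xs|sx|->] := ltgtP x s; first exact: ws.
    by rewrite distrC; exact: ws.
  by rewrite subrr normr0.
move=> /andP[_ s1] /andP[x0 _].
have [c _ ->] := @MVT R (eta i) (derive1 (eta i)) x s xs
  (fun y _ => ltac:(rewrite derive1E; apply: derivableP; exact: inA_derivable))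
  (continuous_subspaceT (inA_continuous (i := i) etaA)).
have [_ _ constL] := etaA.
rewrite normrM -[X in _ <= X]mulr1 ler_pM ?normr_ge0 //.
  by rewrite -(constL c); exact: abs_derive1_le_speed.
by rewrite gtr0_norm ?subr_gt0 //; lra.
Qed.

Lemma inA_abs_le_length eta i s : inA eta -> 0 <= s <= 1 ->
  `|eta i s| <= curve_length eta.
Proof.
move=> etaA s01; have ceta := inA_continuous (i := i) etaA.
have mean0 : RI (eta i) = 0 by case: etaA => [[_ ->] _ _].
have -> : eta i s = RI (fun x => eta i s - eta i x).
  by rewrite Rintegral01B ?Rintegral01_cst ?mean0 ?subr0 //; solve_continuous.
apply: le_trans (le_normr_Rintegral _ _) _.
- exact: measurable_I01.
- by apply: continuous_integrable01; solve_continuous.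
rewrite -[X in _ <= X]Rintegral01_cst; apply: le_Rintegral.
- exact: measurable_I01.
- by apply: continuous_integrable01; solve_continuous.
- by apply: continuous_integrable01; solve_continuous.
by move=> x /in_I01 x01; exact: inA_lipschitz.
Qed.

Lemma inA_moment_le eta i (w : R -> R) : inA eta -> continuous w ->
  `|RI (fun s => eta i s * w s)| <= curve_length eta * RI (fun s => `|w s|).
Proof.
move=> etaA cw; have ceta := inA_continuous (i := i) etaA.
apply: le_trans (le_normr_Rintegral _ _) _.
- exact: measurable_I01.
- by apply: continuous_integrable01; solve_continuous.
rewrite -Rintegral01Z; last by solve_continuous.
apply: le_Rintegral.
- exact: measurable_I01.
- by apply: continuous_integrable01; solve_continuous.
- by apply: continuous_integrable01; solve_continuous.
move=> x /in_I01 x01; rewrite normrM ler_wpM2r //; exact: inA_abs_le_length.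
Qed.

Lemma L2norm_ge_component (f : curve R d) i :
  Num.sqrt (RI (fun s => f i s ^+ 2)) <= L2norm f.
Proof.
rewrite ler_wsqrtr //.
apply: (ler_term_sum (F := fun j => RI (fun s => f j s ^+ 2))) => j; exact: Rintegral01_sqr_ge0.
Qed.

Lemma H2sq_ge_component (f f2 : curve R d) i : RI (fun s => f i s ^+ 2) <= H2sq f f2.
Proof.
rewrite /H2sq; apply: le_trans (ler_term_sum i _); last first.
  by move=> j; rewrite !addr_ge0 ?Rintegral01_sqr_ge0.
by rewrite -addrA lerDl addr_ge0 ?Rintegral01_sqr_ge0.
Qed.

End ConstantSpeedCurves.

Section PathMoment.
Variables (R : realType) (d : nat).
Local Notation mu := (@lebesgue_measure R).
Local Notation J := (@I01 R).
Local Notation RI f := (Rintegral mu J f).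

Definition moment_bound (w : R -> R) :=
  3 * Num.sqrt (RI (fun s => `|w s|)) * Num.sqrt (RI (fun s => w s ^+ 2)).

Lemma moment_bound_ge0 w : 0 <= moment_bound w.
Proof. by rewrite /moment_bound !mulr_ge0 ?sqrtr_ge0. Qed.

Variables (gam G gdot Gdot : R -> curve R d).
Hypothesis gamP : C1_path_A gam G gdot Gdot.
Variables (i : 'I_d) (w : R -> R).
Hypothesis cw : continuous w.

Definition moment t := RI (fun s => gam t i s * w s).
Definition moment' t := RI (fun s => gdot t i s * w s).

Lemma path_inA t : 0 <= t <= 1 -> inA (gam t).
Proof. by case: gamP => gamA _ _ _ t01; case: (gamA t t01). Qed.

Lemma continuous_path t : 0 <= t <= 1 -> continuous (gam t i).
Proof. by move=> t01; apply: inA_continuous; exact: path_inA. Qed.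

Lemma continuous_velocity t : 0 <= t <= 1 -> continuous (gdot t i).
Proof.
case: gamP => _ gdotH2 _ _ t01 x; have [_ dgdot _ _] := gdotH2 t t01 i.
by apply: differentiable_continuous; apply/derivable1_diffP; exact: dgdot.
Qed.

Lemma moment_diff_quotient t : 0 <= t <= 1 ->
  (fun h => (moment (t + h) - moment t) / h)
    @ within (fun h => h != 0 /\ 0 <= t + h <= 1) (nbhs 0) --> moment' t.
Proof.
case: gamP => _ _ dq_gam _ t01.
apply: squeeze_dist_cvgr (dq_gam t t01); rewrite near_withinE.
apply: nearW => h [h0 th01].
have c1 := continuous_path th01; have c0 := continuous_path t01.
have c' := continuous_velocity t01.
have -> : (moment (t + h) - moment t) / h - moment' t =
    RI (fun s => ((gam (t + h) i s - gam t i s) / h - gdot t i s) * w s).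
  rewrite /moment /moment' -Rintegral01B; [|solve_continuous..].
  rewrite mulrC -Rintegral01Z; [|solve_continuous..].
  rewrite -Rintegral01B; [|solve_continuous..].
  by congr Rintegral; apply/funext => s; ring.
apply: le_trans (Rintegral01_Cauchy_Schwarz _ cw) _; first by solve_continuous.
apply: ler_wpM2r; first exact: sqrtr_ge0.
apply: ler_wsqrtr; exact: H2sq_ge_component.
Qed.

Lemma moment'_continuous (t : R) : 0 <= t <= 1 ->
  moment' @ within (fun u => 0 <= u <= 1) (nbhs t) --> moment' t.
Proof.
case: gamP => _ _ _ cgdot t01.
apply: squeeze_dist_cvgr (cgdot t t01); rewrite near_withinE.
apply: nearW => u u01.
have c1 := continuous_velocity u01; have c0 := continuous_velocity t01.
have -> : moment' u - moment' t = RI (fun s => (gdot u i s - gdot t i s) * w s).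
  rewrite /moment' -Rintegral01B; [|solve_continuous..].
  by congr Rintegral; apply/funext => s; ring.
apply: le_trans (Rintegral01_Cauchy_Schwarz _ cw) _; first by solve_continuous.
apply: ler_wpM2r; first exact: sqrtr_ge0.
apply: ler_wsqrtr; exact: H2sq_ge_component.
Qed.

Lemma moment_continuous (t : R) : 0 <= t <= 1 ->
  moment @ within (fun u => 0 <= u <= 1) (nbhs t) --> moment t.
Proof. by move=> t01; exact: diff_quotient_cvg_continuous (moment_diff_quotient t01). Qed.

Lemma is_derive_moment (t : R) : 0 < t < 1 -> is_derive t 1 moment (moment' t).
Proof.
move=> /andP[t0 t1].
have t01 : 0 <= t <= 1 by rewrite !ltW.
have dq : (fun h => (moment (t + h) - moment t) / h) @ 0^' --> moment' t.
  apply: cvg_within_near_subset (moment_diff_quotient t01).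
  apply/nbhs_ballP; exists (Num.min t (1 - t)); first by rewrite /= lt_min t0 subr_gt0.
  move=> h /=; rewrite /ball /= sub0r normrN lt_min => /andP[].
  rewrite !ltr_norml => /andP[? ?] /andP[? ?] h0; split => //; apply/andP; split; lra.
have dqE : (fun h => h^-1 *: ((moment \o shift t) (h *: 1) - moment t)) =
    (fun h => (moment (t + h) - moment t) / h).
  apply/funext => h; change (h^-1 * (moment (h * 1 + t) - moment t) =
    (moment (t + h) - moment t) / h).
  by rewrite mulr1 mulrC (addrC h t).
apply: DeriveDef; rewrite /derivable /derive dqE; [exact: cvgP dq | exact: cvg_lim dq].
Qed.

Lemma soft_cube_moment_LRcontinuous :
  derivable_oo_LRcontinuous (soft_cube \o moment) 0 1.
Proof.
split.
- move=> t; rewrite in_itv /= => t01.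
  by case: (is_derive1_comp (is_derive_soft_cube _) (is_derive_moment t01)).
- apply: continuous_cvg; first exact: continuous_soft_cube.
  apply: cvg_within_near_subset (moment_continuous _); last by rewrite lexx ler01.
  apply/nbhs_ballP; exists 1 => //= u; rewrite /ball /= sub0r normrN ltr_norml.
  by move=> /andP[_ u1] u0; rewrite !ltW.
- apply: continuous_cvg; first exact: continuous_soft_cube.
  apply: cvg_within_near_subset (moment_continuous _); last by rewrite lexx ler01.
  apply/nbhs_ballP; exists 1 => //= u; rewrite /ball /= ltr_norml.
  by move=> /andP[_ u0] u1; rewrite !ltW //; lra.
Qed.

Lemma derive1_soft_cube_moment : {in `]0, 1[,
  derive1 (soft_cube \o moment) =1 (fun t => soft_cube' (moment t) * moment' t)}.
Proof.
move=> t; rewrite in_itv /= => t01; rewrite derive1E.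
have := is_derive1_comp (is_derive_soft_cube _) (is_derive_moment t01).
by move=> D; exact: derive_val.
Qed.

Lemma continuous_soft_cube_moment' :
  {within `[0, 1], continuous (fun t => soft_cube' (moment t) * moment' t)}.
Proof.
apply/subspace_continuousP => t; rewrite -/J I01E => t01.
apply: cvgM; last exact: moment'_continuous.
apply: continuous_cvg; first exact: continuous_soft_cube'.
exact: moment_continuous.
Qed.

Lemma soft_cube_moment'_le (t : R) : 0 <= t <= 1 ->
  `|soft_cube' (moment t) * moment' t| <=
  moment_bound w * (L2norm (gdot t) * Num.sqrt (curve_length (gam t))).
Proof.
move=> t01; have gamA := path_inA t01.
set L := curve_length (gam t).
have L0 : 0 <= L by case: gamA => _ /ltW.
have cube'_le :
    soft_cube' (moment t) <= 3 * (Num.sqrt L * Num.sqrt (RI (fun s => `|w s|))).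
  apply: le_trans (soft_cube'_le_sqrt _) _; rewrite -sqrtrM //.
  by apply: ler_wpM2l => //; apply: ler_wsqrtr; exact: inA_moment_le.
have moment'_le :
    `|moment' t| <= L2norm (gdot t) * Num.sqrt (RI (fun s => w s ^+ 2)).
  apply: le_trans (Rintegral01_Cauchy_Schwarz (continuous_velocity t01) cw) _.
  by apply: ler_wpM2r; [exact: sqrtr_ge0 | exact: L2norm_ge_component].
rewrite normrM (ger0_norm (soft_cube'_ge0 _)).
apply: le_trans (ler_pM (soft_cube'_ge0 _) (normr_ge0 _) cube'_le moment'_le) _.
by rewrite /moment_bound -/L le_eqVlt; apply/orP; left; apply/eqP; ring.
Qed.

Lemma path_length_ge_moment :
  ((`|soft_cube (moment 1) - soft_cube (moment 0)| / (moment_bound w + 1))%:E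
    <= path_length gam gdot)%E.
Proof.
rewrite /path_length; apply: (FTC01_abs_le (f := soft_cube \o moment)).
- by rewrite ltr_wpDl ?moment_bound_ge0.
- exact: soft_cube_moment_LRcontinuous.
- exact: derive1_soft_cube_moment.
- exact: continuous_soft_cube_moment'.
move=> t t01; apply: le_trans (soft_cube_moment'_le t01) _.
by apply: ler_wpM2r; [rewrite mulr_ge0 ?sqrtr_ge0 | rewrite lerDl].
Qed.

End PathMoment.

Theorem proposition2p1 (R : realType) (d : nat) (hd : (2 <= d)%N)
  (eta0 eta1 : curve R d) :
  inA eta0 -> inA eta1 -> eta0 <> eta1 ->
  (0 < distA eta0 eta1)%E.
Proof.
move=> A0 A1 neq; have [i [s [s01 eta01]]] := inA_neq A0 A1 neq.
have c0 := inA_continuous (i := i) A0; have c1 := inA_continuous (i := i) A1.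
pose w s := eta0 i s - eta1 i s.
have cw : continuous w by solve_continuous.
pose pairing (eta : curve R d) :=
  Rintegral lebesgue_measure (@I01 R) (fun s => eta i s * w s).
have gap : pairing eta1 < pairing eta0.
  rewrite -subr_gt0 /pairing -Rintegral01B; [|solve_continuous..].
  have -> : (fun s => eta0 i s * w s - eta1 i s * w s) = (fun s => w s ^+ 2).
    by apply/funext => x; rewrite -mulrBl.
  by apply: Rintegral01_sqr_gt0 cw s01 _; rewrite subr_eq0.
have cube_gap : soft_cube (pairing eta1) != soft_cube (pairing eta0).
  by apply: contraTneq gap => /soft_cube_inj ->; rewrite ltxx.
have K0 : 0 < moment_bound w + 1 by rewrite ltr_wpDl ?moment_bound_ge0.
apply: (@lt_le_trans _ _
  (`|soft_cube (pairing eta1) - soft_cube (pairing eta0)| / (moment_bound w + 1))%:E).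
  by rewrite lte_fin divr_gt0 // normr_gt0 subr_eq0.
apply: le_ereal_inf_tmp => _ [gam [G [gdot [Gdot [gamP e0 e1 ->]]]]].
by have := path_length_ge_moment gamP i cw; rewrite /moment e0 e1.
Qed.
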